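(* For every finite point set $S$ in the plane, the (unordered) pairs of points of $S$ can be $2$-colored such that every axis-parallel rectangle that contains at least $3$ points of $S$ contains pairs of points of $S$ of both colors.
   Context: An axis-parallel rectangle is a set $[a,b]\times[c,d]$. A rectangle contains a pair if it contains both of its points. *)

From HB Require Import structures.
From mathcomp Require Import all_boot all_order all_algebra.
From mathcomp Require Import reals.
Set Implicit Arguments. Unset Strict Implicit. Unset Printing Implicit Defensive.
Import Order.TTheory GRing.Theory Num.Theory.
Local Open Scope ring_scope.

Definition in_rect (R : realType) (a b c d : R) (p : R * R) : bool :=
  (a <= p.1 <= b) && (c <= p.2 <= d).

(* A 2-colouring of unordered pairs of points of S: a colour function that is
   symmetric on S. *)
Definition pair_coloring (R : realType) (S : seq (R * R))
  (col : R * R -> R * R -> bool) : Prop :=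
  forall p q, p \in S -> q \in S -> col p q = col q p.

Definition rect_has_color (R : realType) (S : seq (R * R))
  (col : R * R -> R * R -> bool) (a b c d : R) (k : bool) : Prop :=
  exists p q, [/\ p \in S, q \in S, p != q,
                  in_rect a b c d p && in_rect a b c d q & col p q = k].

From HB Require Import structures.
From mathcomp Require Import all_boot all_order all_algebra.
From mathcomp Require Import reals.
Import Order.TTheory GRing.Theory Num.Theory.
Set Implicit Arguments. Unset Strict Implicit. Unset Printing Implicit Defensive.
Local Open Scope order_scope.

(* A pair {p, q} is concordant when p and q are ordered the same way by
   abscissa and by ordinate.  Colour it by its concordance, flipped when the
   open box spanned by p and q contains another point of S.  Replacing q by a
   point of that box keeps the concordance and stays inside every rectangle
   containing p and q, so each rectangle holds pairs with empty boxes, coloured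
   by their own concordance: every concordance type occurring among pairs of a
   rectangle occurs as a colour.  If three points of a rectangle are pairwise
   concordant of the same type, they form a monotone chain whose middle point
   lies in the box of the two outer points, and that pair gets the other
   colour. *)

Section StrictlyBetween.
Context {disp : Order.disp_t} {T : orderType disp}.
Implicit Types p q r s : T.

Definition strictly_between r p q := (p < r < q) || (q < r < p).

Lemma strictly_betweenC r p q : strictly_between r p q = strictly_between r q p.
Proof. by rewrite /strictly_between orbC. Qed.

Lemma strictly_between_ltl r p q :
  strictly_between r p q -> (p < r) = (p < q).
Proof.
case/orP=> /andP[lo hi]; first by rewrite lo (lt_trans lo hi).
by rewrite ltNge (ltW hi) ltNge (ltW (lt_trans lo hi)).
Qed.

Lemma strictly_between_ltr r p q :
  strictly_between r p q -> (r < q) = (p < q).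
Proof.
case/orP=> /andP[lo hi]; first by rewrite hi (lt_trans lo hi).
by rewrite ltNge (ltW lo) ltNge (ltW (lt_trans lo hi)).
Qed.

Lemma strictly_between_neql r p q : strictly_between r p q -> p != r.
Proof. by case/orP=> /andP[lo hi]; [rewrite lt_eqF | rewrite gt_eqF]. Qed.

Lemma strictly_between_neqr r p q : strictly_between r p q -> r != q.
Proof. by rewrite strictly_betweenC eq_sym; apply: strictly_between_neql. Qed.

Lemma strictly_between_endr p q : strictly_between q p q = false.
Proof. by rewrite /strictly_between ltxx andbF. Qed.

Lemma strictly_between_trans s r p q :
  strictly_between s p r -> strictly_between r p q -> strictly_between s p q.
Proof.
rewrite /strictly_between.
case/orP=> /andP[l1 h1]; case/orP=> /andP[l2 h2].
- by rewrite l1 (lt_trans h1 h2).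
- by have := lt_trans l1 (lt_trans h1 h2); rewrite ltxx.
- by have := lt_trans l2 (lt_trans l1 h1); rewrite ltxx.
- by rewrite h1 (lt_trans l2 l1) orbT.
Qed.

Lemma strictly_between3 p q r : p != q -> p != r -> q != r ->
  [|| strictly_between p q r, strictly_between q p r | strictly_between r p q].
Proof.
rewrite /strictly_between.
by case: (ltgtP p q) => // _; case: (ltgtP p r) => // _; case: (ltgtP q r).
Qed.

Lemma strictly_between_homo (disp' : Order.disp_t) (T' : porderType disp')
    (f : T -> T') (a b : T') r p q :
  {homo f : x y / x < y >-> x <= y} -> strictly_between r p q ->
  a <= f p <= b -> a <= f q <= b -> a <= f r <= b.
Proof.
move=> homo_f /orP[]/andP[/homo_f lo /homo_f hi] /andP[ap pb] /andP[aq qb].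
  by rewrite (le_trans ap lo) (le_trans hi qb).
by rewrite (le_trans aq lo) (le_trans hi pb).
Qed.

End StrictlyBetween.

Lemma lexi_fst_homo (d1 d2 : Order.disp_t) (T1 : orderType d1) (T2 : orderType d2) :
  {homo (@fst T1 T2 : T1 *l T2 -> T1) : x y / x < y >-> x <= y}.
Proof. by move=> x y; rewrite ltEprodlexi => /andP[]. Qed.

Lemma sub_count_lt (T : eqType) (a1 a2 : pred T) (s : seq T) x :
  subpred a1 a2 -> x \in s -> a2 x -> ~~ a1 x -> (count a1 s < count a2 s)%N.
Proof.
move=> sub12 + a2x a1x; elim: s => //= y s IH /predU1P[<-|/IH lt12].
  by rewrite a2x (negbTE a1x) add1n ltnS sub_count.
case a1y: (a1 y); first by rewrite (sub12 _ a1y) ltn_add2l.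
by rewrite add0n (leq_trans lt12) ?leq_addl.
Qed.

Lemma uniq_count_gt2 (T : eqType) (P : pred T) (s : seq T) :
  uniq s -> (2 < count P s)%N ->
  exists x y z, [/\ uniq [:: x; y; z], {subset [:: x; y; z] <= s}
                   & all P [:: x; y; z]].
Proof.
rewrite -size_filter => /(filter_uniq P).
have sub_s : {subset filter P s <= s} by move=> x; rewrite mem_filter => /andP[].
have all_P : all P (filter P s) by apply: filter_all.
case: (filter P s) sub_s all_P => [|x [|y [|z t]]] // sub_s /and4P[Px Py Pz _] uxyzt _.
exists x, y, z; split; last by rewrite /= Px Py Pz.
  by move: uxyzt; rewrite (cat_uniq [:: x; y; z]) => /andP[].
by move=> u uxyz; apply: sub_s; rewrite (mem_cat u [:: x; y; z]) uxyz.
Qed.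

Section BoxColoring.
Variable R : realType.
Implicit Types (p q r : R * R) (S : seq (R * R)).

(* Ties are broken lexicographically, so both orders are total on distinct
   points and no general position assumption is needed. *)
Definition xlex p : R *l R := p.
Definition ylex p : R *l R := (p.2, p.1).

Lemma ylex_inj : injective ylex.
Proof. by case=> [a b] [c d] [-> ->]. Qed.

Definition concordant p q : bool :=
  (xlex p < xlex q) == (ylex p < ylex q).

Definition in_box r p q : bool :=
  strictly_between (xlex r) (xlex p) (xlex q) &&
  strictly_between (ylex r) (ylex p) (ylex q).

Definition box_occupied S p q : bool := has (fun r => in_box r p q) S.

Definition box_color S p q : bool := concordant p q (+) box_occupied S p q.

Lemma concordantC p q : concordant p q = concordant q p.
Proof.
have [->|pq] := eqVneq p q; first by [].
have ypq : ylex p != ylex q by rewrite (inj_eq ylex_inj).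
have xpq : xlex p != xlex q := pq.
rewrite /concordant [xlex q < _]ltNge [ylex q < _]ltNge !le_eqVlt.
rewrite (negbTE xpq) (negbTE ypq) /=.
by case: (xlex p < xlex q); case: (ylex p < ylex q).
Qed.

Lemma in_boxC r p q : in_box r p q = in_box r q p.
Proof. by rewrite /in_box (strictly_betweenC (xlex r)) (strictly_betweenC (ylex r)). Qed.

Lemma box_colorC S p q : box_color S p q = box_color S q p.
Proof. by rewrite /box_color /box_occupied concordantC (eq_has (fun r => in_boxC r p q)). Qed.

Lemma in_box_concordant r p q : in_box r p q -> concordant p r = concordant p q.
Proof.
by case/andP=> /strictly_between_ltl ex /strictly_between_ltl ey; rewrite /concordant ex ey.
Qed.

Lemma in_box_trans s r p q : in_box s p r -> in_box r p q -> in_box s p q.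
Proof.
case/andP=> sx sy /andP[rx ry].
by rewrite /in_box (strictly_between_trans sx rx) (strictly_between_trans sy ry).
Qed.

Lemma in_box_endr p q : in_box q p q = false.
Proof. by rewrite /in_box strictly_between_endr. Qed.

Lemma in_box_rect a b c d r p q : in_box r p q ->
  in_rect a b c d p -> in_rect a b c d q -> in_rect a b c d r.
Proof.
case/andP=> /(strictly_between_homo (@lexi_fst_homo _ _ R R)) rx
            /(strictly_between_homo (@lexi_fst_homo _ _ R R)) ry.
by move=> /andP[/rx{}rx /ry{}ry] /andP[/rx{}rx /ry{}ry]; apply/andP.
Qed.

Lemma monotone_middle_in_box u m v :
  strictly_between (xlex m) (xlex u) (xlex v) ->
  concordant u m = concordant m v -> in_box m u v.
Proof.
move=> mx; rewrite /in_box mx /concordant.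
rewrite (strictly_between_ltl mx) (strictly_between_ltr mx) /=.
have yum : ylex u != ylex m.
  by rewrite (inj_eq ylex_inj); apply: strictly_between_neql mx.
have ymv : ylex m != ylex v.
  by rewrite (inj_eq ylex_inj); apply: strictly_between_neqr mx.
rewrite /strictly_between; case: (xlex u < xlex v).
  by case: (ltgtP (ylex u) (ylex m)) yum; case: (ltgtP (ylex m) (ylex v)) ymv.
by case: (ltgtP (ylex u) (ylex m)) yum; case: (ltgtP (ylex m) (ylex v)) ymv.
Qed.

Lemma exists_empty_box (P : pred (R * R)) S p q :
  (forall r p q, in_box r p q -> P p -> P q -> P r) ->
  p \in S -> q \in S -> p != q -> P p -> P q ->
  exists p' q', [/\ p' \in S, q' \in S, p' != q', P p' && P q' &
                   concordant p' q' = concordant p q /\ ~~ box_occupied S p' q'].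
Proof.
move=> P_box pS; move cnt: (count (fun r => in_box r p q) S) => n.
elim/ltn_ind: n q cnt => n IH q cnt qS pq Pp Pq.
have [/hasP[r rS rpq] | empty] := boolP (box_occupied S p q); last first.
  by exists p, q; rewrite Pp Pq.
have lt_cnt : (count (fun s => in_box s p r) S < n)%N.
  rewrite -cnt; apply: (sub_count_lt _ rS rpq); last by rewrite in_box_endr.
  by move=> s /in_box_trans; apply.
have pr : p != r := strictly_between_neql (andP rpq).1.
have [p' [q' [p'S q'S p'q' Pp'q' [conc empty]]]] :=
  IH _ lt_cnt r erefl rS pr Pp (P_box _ _ _ rpq Pp Pq).
by exists p', q'; split; rewrite // conc (in_box_concordant rpq).
Qed.

Lemma rect_has_concordance_color S a b c d p q :
  p \in S -> q \in S -> p != q -> in_rect a b c d p -> in_rect a b c d q ->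
  rect_has_color S (box_color S) a b c d (concordant p q).
Proof.
move=> pS qS pq rp rq.
have [p' [q' [p'S q'S p'q' rp'q' [conc empty]]]] :=
  exists_empty_box (@in_box_rect a b c d) pS qS pq rp rq.
by exists p', q'; split; rewrite // /box_color (negbTE empty) addbF.
Qed.

Lemma rect_has_color_monotone_chain S a b c d u m v :
  u \in S -> m \in S -> v \in S -> u != v ->
  in_rect a b c d u -> in_rect a b c d v ->
  strictly_between (xlex m) (xlex u) (xlex v) ->
  concordant u m = concordant m v ->
  rect_has_color S (box_color S) a b c d (~~ concordant u m).
Proof.
move=> uS mS vS uv ru rv mx conc.
have muv := monotone_middle_in_box mx conc.
have occ : box_occupied S u v by apply/hasP; exists m.
exists u, v; split; rewrite ?ru ?rv //.
by rewrite /box_color occ addbT (in_box_concordant muv).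
Qed.

Lemma rect_has_color_monochromatic S a b c d x y z :
  x \in S -> y \in S -> z \in S -> x != y -> x != z -> y != z ->
  in_rect a b c d x -> in_rect a b c d y -> in_rect a b c d z ->
  concordant x y = concordant x z -> concordant x z = concordant y z ->
  rect_has_color S (box_color S) a b c d (~~ concordant x y).
Proof.
move=> xS yS zS xy xz yz rx ry rz exy exz.
case/or3P: (@strictly_between3 _ _ (xlex x) (xlex y) (xlex z) xy xz yz) => mid.
- rewrite concordantC; apply: rect_has_color_monotone_chain yS xS zS yz ry rz mid _.
  by rewrite concordantC.
- by apply: rect_has_color_monotone_chain xS yS zS xz rx rz mid _; rewrite exy.
- rewrite exy; apply: rect_has_color_monotone_chain xS zS yS xy rx ry mid _.
  by rewrite exz concordantC.
Qed.

Lemma rect_has_colors_of_triple S a b c d x y z (k : bool) :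
  uniq [:: x; y; z] -> {subset [:: x; y; z] <= S} ->
  all (in_rect a b c d) [:: x; y; z] ->
  rect_has_color S (box_color S) a b c d k.
Proof.
move=> + sub /and4P[rx ry rz _].
rewrite /= !inE !negb_or -!andbA => /and4P[xy xz yz _].
have [xS yS zS] : [/\ x \in S, y \in S & z \in S].
  by split; apply: sub; rewrite !inE eqxx ?orbT.
have [<-|nxy] := eqVneq (concordant x y) k.
  exact: rect_has_concordance_color.
have [<-|nxz] := eqVneq (concordant x z) k.
  exact: rect_has_concordance_color.
have [<-|nyz] := eqVneq (concordant y z) k.
  exact: rect_has_concordance_color.
move: nxy nxz nyz; rewrite !negb_eqb => /addbP nxy /addbP nxz /addbP nyz.
rewrite -nxy; apply: (rect_has_color_monochromatic (z := z)) => //; apply: negb_inj.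
  by rewrite nxy nxz.
by rewrite nxz nyz.
Qed.

End BoxColoring.

Theorem theorem10 (R : realType) (S : seq (R * R)) (HS : uniq S) :
  exists col : R * R -> R * R -> bool,
    pair_coloring S col /\
    forall a b c d : R,
      (3 <= count (in_rect a b c d) S)%N ->
      rect_has_color S col a b c d true /\ rect_has_color S col a b c d false.
Proof.
exists (box_color S); split=> [p q _ _|a b c d]; first exact: box_colorC.
move=> /(uniq_count_gt2 HS)[x [y [z [uxyz sub rect]]]].
by split; apply: rect_has_colors_of_triple uxyz sub rect.
Qed.
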